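(* Let $k$ be an infinite field of characteristic $0$. If $X_1,X_2,Y_1,Y_2$ are finite sets and the free representations $W(X_1,Y_1)$ and $W(X_2,Y_2)$ are isomorphic, then $|X_1|=|X_2|$ and $|Y_1|=|Y_2|$.
   Context: A representation $(L,V)$ is a Lie algebra $L$ over $k$ with an $L$-module $V$; an isomorphism is a pair $(\varphi,\psi)$ of a Lie algebra isomorphism $\varphi$ and a linear bijection $\psi$ with $\varphi(l)\circ\psi(v)=\psi(l\circ v)$. $W(X,Y)=(L(X),A(X)Y)$, where $L(X)$ is the free Lie algebra on $X$, $A(X)$ the free associative algebra with unit on $X$, and $A(X)Y=\bigoplus_{y\in Y}A(X)y$ the free $A(X)$-module with basis $Y$. *)

From HB Require Import structures.
From mathcomp Require Import all_boot all_order all_algebra.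
From mathcomp Require Import monalg.
Set Implicit Arguments. Unset Strict Implicit. Unset Printing Implicit Defensive.
Import GRing.Theory.
Local Open Scope ring_scope.

(* A(X): the free associative unital k-algebra on X, realized as the monoid
   algebra of the free monoid {fmonom X} (noncommutative polynomials). *)
Definition FreeAlg (k : fieldType) (X : finType) := {malg k[{fmonom X}]}.

Definition gen (k : fieldType) (X : finType) (x : X) : FreeAlg k X :=
  << fmu x >>.

Definition lie (k : fieldType) (X : finType) (a b : FreeAlg k X) : FreeAlg k X :=
  a * b - b * a.

(* L(X): the Lie subalgebra of A(X) generated by X (the free Lie algebra). *)
Inductive inLie (k : fieldType) (X : finType) : FreeAlg k X -> Prop :=
  | inLie_gen (x : X) : inLie (gen k x)
  | inLie_0 : inLie 0
  | inLie_lin (c : k) (a b : FreeAlg k X) :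
      inLie a -> inLie b -> inLie (c *: a + b)
  | inLie_br (a b : FreeAlg k X) : inLie a -> inLie b -> inLie (lie a b).

(* A(X)Y: the free left A(X)-module with basis Y (coordinates indexed by Y) *)
Definition FreeMod (k : fieldType) (X Y : finType) := {ffun Y -> FreeAlg k X}.

(* the A(X)-action (left multiplication), restricted to L(X) in W(X,Y) *)
Definition act (k : fieldType) (X Y : finType) (a : FreeAlg k X)
  (v : FreeMod k X Y) : FreeMod k X Y := [ffun y => a * v y].

(* (phi, psi) is an isomorphism of representations
   W(X1,Y1) = (L(X1), A(X1)Y1) --> W(X2,Y2) = (L(X2), A(X2)Y2):
   phi restricted to L(X1) is a Lie algebra isomorphism onto L(X2),
   psi is a k-linear bijection, and phi(l) . psi(v) = psi(l . v). *)
Definition rep_iso (k : fieldType) (X1 Y1 X2 Y2 : finType)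
  (phi : FreeAlg k X1 -> FreeAlg k X2)
  (psi : FreeMod k X1 Y1 -> FreeMod k X2 Y2) : Prop :=
  (forall l, inLie l -> inLie (phi l)) /\
  (forall l2, inLie l2 -> exists l, inLie l /\ phi l = l2) /\
  (forall l l', inLie l -> inLie l' -> phi l = phi l' -> l = l') /\
  (forall (c : k) l l', inLie l -> inLie l' ->
      phi (c *: l + l') = c *: phi l + phi l') /\
  (forall l l', inLie l -> inLie l' -> phi (lie l l') = lie (phi l) (phi l')) /\
  (forall (c : k) u v, psi (c *: u + v) = c *: psi u + psi v) /\
  bijective psi /\
  (forall l v, inLie l -> psi (act l v) = act (phi l) (psi v)).

From HB Require Import structures.
From mathcomp Require Import all_boot all_order all_algebra.
From mathcomp Require Import monalg zify.
Set Implicit Arguments. Unset Strict Implicit. Unset Printing Implicit Defensive.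
Import GRing.Theory.
Local Open Scope ring_scope.

(* The degree-one coefficients identify the abelianisation L(X) / [L(X), L(X)]
   with k^X, and the constant terms identify the coinvariants
   A(X)Y / L(X) A(X)Y with k^Y.  An isomorphism (phi, psi) of representations
   maps [L, L] onto [L, L] and L A(X)Y onto L A(X)Y, so it induces linear
   bijections k^X1 -> k^X2 and k^Y1 -> k^Y2. *)

Lemma linear_rV_dim_eq (k : fieldType) m n (g : 'rV[k]_m -> 'rV[k]_n) :
  linear g -> (forall u, g u = 0 -> u = 0) -> (forall t, exists u, g u = t) ->
  m = n.
Proof.
move=> g_lin g_ker0 g_onto.
pose gL : {linear _ -> _} := HB.pack g (GRing.isLinear.Build _ _ _ _ g g_lin).
have gE u : u *m lin1_mx gL = g u := mul_rV_lin1 gL u.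
have free : row_free (lin1_mx gL).
  by apply: inj_row_free => u; rewrite gE; apply: g_ker0.
have full : row_full (lin1_mx gL).
  rewrite -sub1mx; apply/row_subP => i; have [u <-] := g_onto (row i 1%:M).
  by rewrite -gE submxMl.
exact: etrans (esym (eqP free)) (eqP full).
Qed.

Lemma map0_of_linear_on (k : fieldType) (A B : lmodType k) (S : A -> Prop)
    (f : A -> B) :
  S 0 -> (forall c a a', S a -> S a' -> f (c *: a + a') = c *: f a + f a') ->
  f 0 = 0.
Proof.
move=> S0 f_lin; apply: (addIr (f 0)).
by rewrite add0r -{1}[f 0]scale1r -f_lin // scale1r addr0.
Qed.

(* [D] induces an isomorphism from S/K onto 'rV_n, whose inverse is induced by [G]. *)
Definition quotient_coords (k : fieldType) (A : lmodType k) n (S K : A -> Prop)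
    (D : {linear A -> 'rV[k]_n}) (G : {linear 'rV[k]_n -> A}) :=
  [/\ cancel G D, forall c, S (G c), forall a, K a -> S a /\ D a = 0
    & forall a, S a -> K (a - G (D a))].

Section QuotientDimension.
Variables (k : fieldType) (A1 A2 : lmodType k) (n1 n2 : nat).
Variables (S1 K1 : A1 -> Prop) (S2 K2 : A2 -> Prop).
Variables (D1 : {linear A1 -> 'rV[k]_n1}) (G1 : {linear 'rV[k]_n1 -> A1}).
Variables (D2 : {linear A2 -> 'rV[k]_n2}) (G2 : {linear 'rV[k]_n2 -> A2}).
Hypotheses (coords1 : quotient_coords S1 K1 D1 G1)
           (coords2 : quotient_coords S2 K2 D2 G2).
Variable f : A1 -> A2.
Hypotheses (fS : forall a, S1 a -> S2 (f a))
  (f_onto : forall b, S2 b -> exists a, S1 a /\ f a = b)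
  (f_inj : forall a a', S1 a -> S1 a' -> f a = f a' -> a = a')
  (f_lin : forall c a a', S1 a -> S1 a' -> f (c *: a + a') = c *: f a + f a')
  (fK : forall a, K1 a -> K2 (f a))
  (fK_onto : forall b, K2 b -> exists a, K1 a /\ f a = b).

Lemma quotient_coords_dim_eq : n1 = n2.
Proof.
have [DG1 SG1 KD1 SK1] := coords1; have [DG2 SG2 KD2 SK2] := coords2.
apply: (@linear_rV_dim_eq k _ _ (fun c => D2 (f (G1 c)))).
- by move=> c u v; rewrite linearP f_lin ?SG1 // linearP.
- move=> c fc0; have /fK_onto[a [Ka fa]] : K2 (f (G1 c)).
    by have := SK2 _ (fS (SG1 c)); rewrite fc0 linear0 subr0.
  have [Sa Da] := KD1 a Ka.
  by rewrite -[c]DG1 -(f_inj Sa (SG1 c) fa) Da.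
- move=> t; have [a [Sa fa]] := f_onto (SG2 t); exists (D1 a).
  have Kd := SK1 _ Sa; have [Sd _] := KD1 _ Kd; have [_ Dfd] := KD2 _ (fK Kd).
  have fa_split : f a = f (G1 (D1 a)) + f (a - G1 (D1 a)).
    by rewrite -[f (G1 _)]scale1r -f_lin ?SG1 // scale1r subrKC.
  by rewrite -[t]DG2 -fa fa_split linearD Dfd addr0.
Qed.

End QuotientDimension.

Section FreeAlgebra.
Variables (k : fieldType) (X : finType).
Local Notation e1 := (@mone {fmonom X}).
Implicit Types (x : X) (a b l : FreeAlg k X) (m : {fmonom X}).

Lemma coef1M a b : (a * b)@_e1 = a@_e1 * b@_e1.
Proof. exact: (mcoeff1g_is_multiplicative _ k).1. Qed.

Lemma coef_gen x m : (gen k x)@_m = (fmu x == m)%:R.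
Proof. exact: mcoeffU1. Qed.

Lemma coef1_gen x : (gen k x)@_e1 = 0.
Proof. by rewrite coef_gen fm1_eq1. Qed.

Lemma coef_fmuM_eq0 a b x : a@_e1 = 0 -> b@_e1 = 0 -> (a * b)@_(fmu x) = 0.
Proof.
move=> a0 b0; rewrite mcoeffMl big1_seq // => m1 _; rewrite big1_seq // => m2 _.
have [e|] := eqVneq (mmul m1 m2) (fmu x); last by rewrite mulr0n.
have deg : (fdeg m1 + fdeg m2)%N = 1%N by rewrite -fdegM e fdegU.
have [/eqP|m1n0] := eqVneq (fdeg m1) 0%N.
  by rewrite fdeg_eq0 => /eqP->; rewrite a0 mul0r.
have /eqP : fdeg m2 = 0%N by lia.
by rewrite fdeg_eq0 => /eqP->; rewrite b0 mulr0.
Qed.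

Lemma coef_lie a b m : (lie a b)@_m = (a * b)@_m - (b * a)@_m.
Proof. exact: mcoeffB. Qed.

Lemma coef1_lie l : inLie l -> l@_e1 = 0.
Proof.
elim=> [x||c a b _ Ha _ Hb|a b _ Ha _ Hb].
- exact: coef1_gen.
- exact: mcoeff0.
- by rewrite mcoeffD mcoeffZ Ha Hb mulr0 addr0.
(* Plain [!coef1M] would try to unify [a * b] with [b * a], unfolding the
   convolution product; hence the explicit occurrence patterns. *)
- by rewrite coef_lie [X in X - _]coef1M [X in _ - X]coef1M Ha Hb mulr0 subrr.
Qed.

Lemma genMU x c m : gen k x * << c *g m >> = << c *g mmul (fmu x) m >>.
Proof. by rewrite /gen malgM_def fgmulUU mul1r. Qed.

Lemma augmentation_decomp a :
  exists q : X -> FreeAlg k X, a = (a@_e1)%:MP + \sum_x gen k x * q x.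
Proof.
pose P b := exists q : X -> FreeAlg k X, b = (b@_e1)%:MP + \sum_x gen k x * q x.
rewrite [a]monalgE; apply: (big_ind P).
- by exists (fun=> 0); rewrite mcoeff0 malgC0E add0r big1 // => x _; rewrite mulr0.
- move=> b1 b2 [q1 E1] [q2 E2]; exists (fun x => q1 x + q2 x).
  rewrite {1}E1 {1}E2 mcoeffD rmorphD.
  under [in RHS]eq_bigr do rewrite mulrDr.
  by rewrite big_split /= addrACA.
- move=> m _; move: (a@_m) => c; case: m => [[|y s]].
    exists (fun=> 0); rewrite big1 ?addr0; last by move=> x _; rewrite mulr0.
    by rewrite -fmoneE mcoeffUU.
  exists (fun x => if x == y then << c *g FMonom s >> else 0).
  have -> : FMonom (y :: s) = mmul (fmu y) (FMonom s) by apply/eqP; rewrite fmP fmM fmU.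
  rewrite mcoeffU fmM_eq1 fm1_eq1 mulr0n malgC0E add0r (bigD1 y) //= eqxx genMU.
  by rewrite big1 ?addr0 // => x /negbTE->; rewrite mulr0.
Qed.

Definition deg1_coefs a : 'rV[k]_#|X| := \row_i a@_(fmu (enum_val i)).

Definition gens_comb (c : 'rV[k]_#|X|) : FreeAlg k X :=
  \sum_i c 0 i *: gen k (enum_val i).

Fact deg1_coefs_is_linear : linear deg1_coefs.
Proof. by move=> c a b; apply/rowP=> i; rewrite !mxE mcoeffD mcoeffZ. Qed.

HB.instance Definition _ := GRing.isLinear.Build k (FreeAlg k X) 'rV[k]_#|X| _
  deg1_coefs deg1_coefs_is_linear.

Fact gens_comb_is_linear : linear gens_comb.
Proof.
move=> c u v; rewrite scaler_sumr -big_split; apply: eq_bigr => i _ /=.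
by rewrite !mxE scalerDl scalerA.
Qed.

HB.instance Definition _ := GRing.isLinear.Build k 'rV[k]_#|X| (FreeAlg k X) _
  gens_comb gens_comb_is_linear.

Lemma fmu_inj : injective (@fmu X).
Proof. by move=> x y /eqP; rewrite fmP !fmU eqseq_cons andbT => /eqP. Qed.

Lemma gens_combK : cancel gens_comb deg1_coefs.
Proof.
move=> c; apply/rowP=> i; rewrite !mxE raddf_sum /= (bigD1 i) //= big1.
  by rewrite mcoeffZ coef_gen eqxx mulr1 addr0.
move=> j ji; rewrite mcoeffZ coef_gen (inj_eq fmu_inj) (inj_eq enum_val_inj).
by rewrite (negbTE ji) mulr0.
Qed.

Lemma gens_comb_gen x : gens_comb (deg1_coefs (gen k x)) = gen k x.
Proof.
rewrite /gens_comb (bigD1 (enum_rank x)) //= big1.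
  by rewrite mxE coef_gen enum_rankK eqxx scale1r addr0.
move=> i; rewrite mxE coef_gen (inj_eq fmu_inj) -(inj_eq enum_val_inj) enum_rankK.
by rewrite eq_sym => /negbTE->; rewrite scale0r.
Qed.

Lemma inLieZ c l : inLie l -> inLie (c *: l).
Proof. by move=> Ll; rewrite -[_ *: _]addr0; apply: inLie_lin => //; apply: inLie_0. Qed.

Lemma inLie_gens_comb c : inLie (gens_comb c).
Proof.
apply: big_ind => [|a b La Lb|i _]; first exact: inLie_0.
  by rewrite -[a]scale1r; apply: inLie_lin.
by apply/inLieZ/inLie_gen.
Qed.

Inductive inDerived : FreeAlg k X -> Prop :=
  | inDerived0 : inDerived 0
  | inDerived_lie c a b d :
      inLie a -> inLie b -> inDerived d -> inDerived (c *: lie a b + d).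

Lemma inDerived_lin c d d' : inDerived d -> inDerived d' -> inDerived (c *: d + d').
Proof.
elim=> [|c' a b d1 La Lb _ IH] Dd'; first by rewrite scaler0 add0r.
by rewrite scalerDr -addrA scalerA; apply: inDerived_lie => //; apply: IH.
Qed.

Lemma inDerived_inLie d : inDerived d -> inLie d.
Proof.
elim=> [|c a b d1 La Lb _ Ld]; first exact: inLie_0.
by apply: inLie_lin => //; apply: inLie_br.
Qed.

Lemma deg1_coefs_lie a b : inLie a -> inLie b -> deg1_coefs (lie a b) = 0.
Proof.
move=> La Lb; apply/rowP=> i; rewrite !mxE coef_lie.
have [a0 b0] := (coef1_lie La, coef1_lie Lb).
by rewrite [X in X - _](coef_fmuM_eq0 _ a0 b0) [X in _ - X](coef_fmuM_eq0 _ b0 a0) subrr.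
Qed.

Lemma deg1_coefs_derived d : inDerived d -> deg1_coefs d = 0.
Proof.
elim=> [|c a b d1 La Lb _ IH]; first exact: linear0.
by rewrite linearP /= deg1_coefs_lie // IH scaler0 addr0.
Qed.

Lemma inLie_sub_gens_comb l : inLie l -> inDerived (l - gens_comb (deg1_coefs l)).
Proof.
elim=> [x||c a b _ Da _ Db|a b La _ Lb _].
- by rewrite gens_comb_gen subrr; apply: inDerived0.
- by rewrite !linear0 addr0; apply: inDerived0.
- have -> : c *: a + b - gens_comb (deg1_coefs (c *: a + b)) =
      c *: (a - gens_comb (deg1_coefs a)) + (b - gens_comb (deg1_coefs b)).
    by rewrite (linearP deg1_coefs) (linearP gens_comb) scalerBr opprD addrACA.
  exact: inDerived_lin.
- rewrite deg1_coefs_lie // linear0 subr0 -[lie a b]addr0 -[lie a b]scale1r.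
  by apply: inDerived_lie => //; apply: inDerived0.
Qed.

Lemma lie_quotient_coords :
  quotient_coords (@inLie k X) inDerived deg1_coefs gens_comb.
Proof.
split=> [|c|d Dd|l]; [exact: gens_combK | exact: inLie_gens_comb | |
  exact: inLie_sub_gens_comb].
by split; [exact: inDerived_inLie | exact: deg1_coefs_derived].
Qed.

End FreeAlgebra.

Section FreeModule.
Variables (k : fieldType) (X Y : finType).
Local Notation e1 := (@mone {fmonom X}).
Implicit Types (l : FreeAlg k X) (v w : FreeMod k X Y).

Definition const_coefs v : 'rV[k]_#|Y| := \row_i (v (enum_val i))@_e1.

Definition const_vec (c : 'rV[k]_#|Y|) : FreeMod k X Y :=
  [ffun y => (c 0 (enum_rank y))%:MP].

Fact const_coefs_is_linear : linear const_coefs.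
Proof. by move=> c u v; apply/rowP=> i; rewrite !mxE !ffunE mcoeffD mcoeffZ. Qed.

HB.instance Definition _ := GRing.isLinear.Build k (FreeMod k X Y) 'rV[k]_#|Y| _
  const_coefs const_coefs_is_linear.

Fact const_vec_is_linear : linear const_vec.
Proof.
move=> c u v; apply/ffunP=> y; rewrite [LHS]ffunE !mxE [RHS]ffunE.
rewrite [X in _ = X + _]ffunE [X in _ = _ + X]ffunE [X in _ = _ *: X + _]ffunE.
by rewrite rmorphD -mul_malgC (rmorphM (@malgC _ k)).
Qed.

HB.instance Definition _ := GRing.isLinear.Build k 'rV[k]_#|Y| (FreeMod k X Y) _
  const_vec const_vec_is_linear.

Lemma const_vecK : cancel const_vec const_coefs.
Proof. by move=> c; apply/rowP=> i; rewrite !mxE ffunE malgCK enum_valK. Qed.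

Inductive inActSpan : FreeMod k X Y -> Prop :=
  | inActSpan0 : inActSpan 0
  | inActSpan_act l v w : inLie l -> inActSpan w -> inActSpan (act l v + w).

Lemma const_coefs_act l v : inLie l -> const_coefs (act l v) = 0.
Proof.
by move=> Ll; apply/rowP=> i; rewrite !mxE ffunE coef1M coef1_lie // mul0r.
Qed.

Lemma const_coefs_actspan w : inActSpan w -> const_coefs w = 0.
Proof.
by elim=> [|l v w' Ll _ IH]; rewrite ?linear0 // linearD /= const_coefs_act // IH addr0.
Qed.

Lemma inActSpan_sum_gens (U : X -> FreeMod k X Y) :
  inActSpan (\sum_x act (gen k x) (U x)).
Proof.
elim: (index_enum X) => [|x r IH]; first by rewrite big_nil; apply: inActSpan0.
by rewrite big_cons; apply: inActSpan_act => //; apply: inLie_gen.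
Qed.

Lemma inActSpan_sub_const v : inActSpan (v - const_vec (const_coefs v)).
Proof.
have /fin_all_exists[q Eq] := fun y => augmentation_decomp (v y).
suff -> : v - const_vec (const_coefs v) = \sum_x act (gen k x) [ffun y => q y x].
  exact: inActSpan_sum_gens.
apply/ffunP=> y; rewrite sum_ffunE !ffunE mxE enum_rankK {1}(Eq y) addrAC subrr add0r.
by apply: eq_bigr => x _; rewrite !ffunE.
Qed.

Lemma act_quotient_coords :
  quotient_coords (fun=> True) inActSpan const_coefs const_vec.
Proof.
split=> [|//|w Sw|v _]; [exact: const_vecK | | exact: inActSpan_sub_const].
by split; last exact: const_coefs_actspan.
Qed.

End FreeModule.

Section LieIsomorphism.
Variables (k : fieldType) (X1 X2 : finType) (phi : FreeAlg k X1 -> FreeAlg k X2).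
Hypotheses (phiL : forall l, inLie l -> inLie (phi l))
  (phi_onto : forall l2, inLie l2 -> exists l, inLie l /\ phi l = l2)
  (phi_lin : forall c l l', inLie l -> inLie l' ->
      phi (c *: l + l') = c *: phi l + phi l')
  (phi_lie : forall l l', inLie l -> inLie l' ->
      phi (lie l l') = lie (phi l) (phi l')).

Lemma inDerived_map d : inDerived d -> inDerived (phi d).
Proof.
elim=> [|c a b d1 La Lb Dd IH].
  by rewrite (map0_of_linear_on (inLie_0 k X1) phi_lin); apply: inDerived0.
rewrite phi_lin ?phi_lie //; [|exact: inLie_br | exact: inDerived_inLie].
by apply: inDerived_lie => //; apply: phiL.
Qed.

Lemma inDerived_map_onto d2 : inDerived d2 -> exists d, inDerived d /\ phi d = d2.
Proof.
elim=> [|c a2 b2 _ La2 Lb2 _ [d [Dd <-]]].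
  exists 0; split; first exact: inDerived0.
  exact: map0_of_linear_on (inLie_0 k X1) phi_lin.
have [a [La <-]] := phi_onto La2; have [b [Lb <-]] := phi_onto Lb2.
exists (c *: lie a b + d); split; first exact: inDerived_lie.
by rewrite phi_lin ?phi_lie //; [apply: inLie_br | apply: inDerived_inLie].
Qed.

End LieIsomorphism.

Section ModuleIsomorphism.
Variables (k : fieldType) (X1 Y1 X2 Y2 : finType).
Variables (phi : FreeAlg k X1 -> FreeAlg k X2)
  (psi : FreeMod k X1 Y1 -> FreeMod k X2 Y2).
Hypotheses (phiL : forall l, inLie l -> inLie (phi l))
  (phi_onto : forall l2, inLie l2 -> exists l, inLie l /\ phi l = l2)
  (psi_lin : linear psi) (psi_bij : bijective psi)
  (psi_act : forall l v, inLie l -> psi (act l v) = act (phi l) (psi v)).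

Let psi0 : psi 0 = 0.
Proof.
by apply: (@map0_of_linear_on _ _ _ (fun=> True)) => // c a a' _ _; apply: psi_lin.
Qed.

Let psiD v w : psi (v + w) = psi v + psi w.
Proof. by have := psi_lin 1 v w; rewrite !scale1r. Qed.

Lemma inActSpan_map w : inActSpan w -> inActSpan (psi w).
Proof.
elim=> [|l v w' Ll _ IH]; first by rewrite psi0; apply: inActSpan0.
by rewrite psiD (psi_act _ Ll); apply: inActSpan_act => //; apply: phiL.
Qed.

Lemma inActSpan_map_onto w2 : inActSpan w2 -> exists w, inActSpan w /\ psi w = w2.
Proof.
have [psi' _ psi'K] := psi_bij.
elim=> [|l2 v2 w2' Ll2 _ [w [Sw <-]]].
  by exists 0; split; [apply: inActSpan0 | apply: psi0].
have [l [Ll <-]] := phi_onto Ll2.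
exists (act l (psi' v2) + w); split; first exact: inActSpan_act.
by rewrite psiD (psi_act _ Ll) psi'K.
Qed.

End ModuleIsomorphism.

Theorem theorem4 (k : fieldType)
  (hchar : [pchar k] =i pred0)
  (hinf : ~ exists s : seq k, forall x : k, x \in s)
  (X1 Y1 X2 Y2 : finType) :
  (exists (phi : FreeAlg k X1 -> FreeAlg k X2)
          (psi : FreeMod k X1 Y1 -> FreeMod k X2 Y2), rep_iso phi psi) ->
  #|X1| = #|X2| /\ #|Y1| = #|Y2|.
Proof.
move=> [phi [psi [phiL [phi_onto [phi_inj [phi_lin [phi_lie [psi_lin [psi_bij psi_act]]]]]]]]].
split.
  apply: (quotient_coords_dim_eq (lie_quotient_coords k X1) (lie_quotient_coords k X2)
    phiL phi_onto phi_inj phi_lin).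
  - exact: inDerived_map.
  - exact: inDerived_map_onto.
apply: (quotient_coords_dim_eq (act_quotient_coords k X1 Y1)
  (act_quotient_coords k X2 Y2) (f := psi)).
- by [].
- by move=> w _; have [psi' _ psi'K] := psi_bij; exists (psi' w).
- by move=> v v' _ _; apply: bij_inj.
- by move=> c v v' _ _; apply: psi_lin.
- exact: (inActSpan_map phiL psi_lin psi_act).
- exact: (inActSpan_map_onto phi_onto psi_lin psi_bij psi_act).
Qed.
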